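(* Let $A\in\mathbb{R}^{m\times n}$ be semi-monotone, let $A=P_1-R_1+S_1$ be a double proper weak regular splitting and $A=P_2-R_2+S_2$ a double proper regular splitting of $A$. Suppose $N(S_2)\supseteq N(P_2)$, $R(S_2)\subseteq R(P_2)$, $1\notin\sigma(S_2P_1^{\dagger})$ and $\widehat{A}^{\dagger}\geq 0$, where $\widehat{A}=(I-S_2P_1^{\dagger})A$. If $P_1^{\dagger}R_1\geq P_2^{\dagger}R_2$ and $P_2^{\dagger}S_2\geq P_1^{\dagger}S_1$, then $\rho(W_{12})\leq\rho(T_1)<1$, where $$W_{12}=\begin{pmatrix} P_2^{\dagger}R_2-P_2^{\dagger}S_2P_1^{\dagger}R_1 & P_2^{\dagger}S_2P_1^{\dagger}S_1\\ I & 0\end{pmatrix},\qquad T_1=\begin{pmatrix} P_1^{\dagger}R_1 & -P_1^{\dagger}S_1\\ I&0\end{pmatrix}.$$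
   Context: For $M\in\mathbb{R}^{m\times n}$, $M^{\dagger}$ is its Moore–Penrose inverse, $R(M)$, $N(M)$ its range and null space; inequalities are entrywise; $\rho$ is the spectral radius, $\sigma$ the spectrum. $A$ is semi-monotone if $A^{\dagger}\geq 0$. A double splitting $A=P-R+S$ is a double proper splitting if $R(P)=R(A)$ and $N(P)=N(A)$; it is double proper regular if moreover $P^{\dagger}\geq0$, $R\geq0$, $S\leq0$; double proper weak regular if moreover $P^{\dagger}\geq 0$, $P^{\dagger}R\geq 0$, $P^{\dagger}S\leq 0$. *)

From HB Require Import structures.
From mathcomp Require Import all_boot all_order all_algebra.
From mathcomp Require Import complex.
Set Implicit Arguments. Unset Strict Implicit. Unset Printing Implicit Defensive.
Import Order.TTheory GRing.Theory Num.Theory.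
Local Open Scope ring_scope.

(* Real matrices are modelled over an arbitrary real closed field R
   (this includes the real numbers); complex eigenvalues live in R[i]. *)

(* X is the Moore-Penrose inverse of A (the four Penrose equations;
   over the reals the conjugate transpose is the transpose). *)
Definition is_MP_inverse (R : rcfType) (m n : nat)
  (A : 'M[R]_(m, n)) (X : 'M[R]_(n, m)) : Prop :=
  [/\ A *m X *m A = A, X *m A *m X = X,
      (A *m X)^T = A *m X & (X *m A)^T = X *m A].

Definition mx_ge0 (R : rcfType) (m n : nat) (A : 'M[R]_(m, n)) : Prop :=
  forall i j, 0 <= A i j.
Definition mx_le0 (R : rcfType) (m n : nat) (A : 'M[R]_(m, n)) : Prop :=
  forall i j, A i j <= 0.
Definition mx_le (R : rcfType) (m n : nat) (A B : 'M[R]_(m, n)) : Prop :=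
  forall i j, A i j <= B i j.

Definition in_range (R : rcfType) (m n : nat) (M : 'M[R]_(m, n)) (y : 'cV[R]_m) : Prop :=
  exists x : 'cV[R]_n, y = M *m x.
Definition in_null (R : rcfType) (m n : nat) (M : 'M[R]_(m, n)) (x : 'cV[R]_n) : Prop :=
  M *m x = 0.

Definition same_range (R : rcfType) (m n : nat) (M N : 'M[R]_(m, n)) : Prop :=
  forall y, in_range M y <-> in_range N y.
Definition same_null (R : rcfType) (m n : nat) (M N : 'M[R]_(m, n)) : Prop :=
  forall x, in_null M x <-> in_null N x.

Definition double_proper_splitting (R : rcfType) (m n : nat)
  (A P Rm S : 'M[R]_(m, n)) : Prop :=
  [/\ A = P - Rm + S, same_range P A & same_null P A].

Definition double_proper_regular (R : rcfType) (m n : nat)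
  (A P Rm S : 'M[R]_(m, n)) (Pd : 'M[R]_(n, m)) : Prop :=
  [/\ double_proper_splitting A P Rm S, is_MP_inverse P Pd,
      mx_ge0 Pd, mx_ge0 Rm & mx_le0 S].

Definition double_proper_weak_regular (R : rcfType) (m n : nat)
  (A P Rm S : 'M[R]_(m, n)) (Pd : 'M[R]_(n, m)) : Prop :=
  [/\ double_proper_splitting A P Rm S, is_MP_inverse P Pd,
      mx_ge0 Pd, mx_ge0 (Pd *m Rm) & mx_le0 (Pd *m S)].

Definition spectrum (R : rcfType) (n : nat) (A : 'M[R]_n) : seq R[i] :=
  sval (closed_field_poly_normal (char_poly (map_mx (real_complex R) A))).

(* spectral radius: max |lambda| over the spectrum (0 for the empty matrix) *)
Definition spectral_radius (R : rcfType) (n : nat) (A : 'M[R]_n) : R :=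
  \big[Num.max/0]_(z <- spectrum A) Normc.normc z.

From HB Require Import structures.
From mathcomp Require Import all_boot all_order all_algebra.
From mathcomp Require Import complex polyrcf.
From mathcomp Require Import ring lra.
Set Implicit Arguments. Unset Strict Implicit. Unset Printing Implicit Defensive.
Import Order.TTheory GRing.Theory Num.Theory.
Local Open Scope ring_scope.

(* For a nonnegative square matrix B and s > 0, either s%:M - B is monotone on
   row vectors (x (sI - B) >= 0 forces x >= 0), which happens exactly when
   s > rho(B), or some nonzero y >= 0 satisfies s y <= y B; both facts follow
   by induction on the size of B through a Schur complement.
   With X_i = P_i^+ R_i and Y_i = - P_i^+ S_i, T1 and W12 are the companion
   matrices of (X1, Y1) and (X2 + Y2 X1, Y2 Y1).  A vector y >= 0 with
   y <= y T1 would give y1 <= y1 P1^+ (P1 - A), which the identity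
   (I - P1^+ (P1 - A)) A^+ = P1^+ and A^+ >= 0 rule out; so rho(T1) < 1.
   For 0 < s <= 1, X2 <= X1 and Y2 <= Y1 turn a vector certifying
   s <= rho(W12) into one certifying s <= rho(T1); taking
   s = min(rho(W12), 1) gives rho(W12) <= rho(T1). *)

Section NonnegativeMatrices.
Variable R : rcfType.

Lemma mx_ge0_mul m n p (A : 'M[R]_(m, n)) (B : 'M[R]_(n, p)) :
  mx_ge0 A -> mx_ge0 B -> mx_ge0 (A *m B).
Proof. by move=> hA hB i j; rewrite mxE; apply: sumr_ge0 => k _; apply: mulr_ge0. Qed.

Lemma mx_ge0_add m n (A B : 'M[R]_(m, n)) : mx_ge0 A -> mx_ge0 B -> mx_ge0 (A + B).
Proof. by move=> hA hB i j; rewrite mxE; apply: addr_ge0. Qed.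

Lemma mx_ge0_scale m n a (A : 'M[R]_(m, n)) : 0 <= a -> mx_ge0 A -> mx_ge0 (a *: A).
Proof. by move=> ha hA i j; rewrite mxE; apply: mulr_ge0. Qed.

Lemma mx_ge00 m n : mx_ge0 (0 : 'M[R]_(m, n)).
Proof. by move=> i j; rewrite mxE. Qed.

Lemma mx_ge01 n : mx_ge0 (1%:M : 'M[R]_n).
Proof. by move=> i j; rewrite mxE; case: (i == j). Qed.

Lemma mx_ge0_opp m n (A : 'M[R]_(m, n)) : mx_le0 A -> mx_ge0 (- A).
Proof. by move=> h i j; rewrite mxE oppr_ge0. Qed.

Lemma mx_leE m n (A B : 'M[R]_(m, n)) : mx_le A B <-> mx_ge0 (B - A).
Proof. by split=> h i j; [rewrite !mxE subr_ge0 | have := h i j; rewrite !mxE subr_ge0]. Qed.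

Lemma mx_ge0_anti m n (A : 'M[R]_(m, n)) : mx_ge0 A -> mx_ge0 (- A) -> A = 0.
Proof.
move=> h1 h2; apply/matrixP => i j; have := h2 i j; rewrite !mxE oppr_ge0 => h.
by apply/eqP; rewrite eq_le h h1.
Qed.

Lemma mx_ge0_row m n1 n2 (A : 'M[R]_(m, n1)) (B : 'M[R]_(m, n2)) :
  mx_ge0 (row_mx A B) <-> mx_ge0 A /\ mx_ge0 B.
Proof.
split=> [h | [hA hB] i j].
  by split=> i j; [rewrite -(row_mxEl A B) | rewrite -(row_mxEr A B)].
by case: (split_ordP j) => k ->; [rewrite row_mxEl | rewrite row_mxEr].
Qed.

Lemma mx_le_row m n1 n2 (A A' : 'M[R]_(m, n1)) (B B' : 'M[R]_(m, n2)) :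
  mx_le (row_mx A B) (row_mx A' B') <-> mx_le A A' /\ mx_le B B'.
Proof. by rewrite !mx_leE opp_row_mx add_row_mx; exact: mx_ge0_row. Qed.

Lemma mx_ge0_block m1 m2 n1 n2 (A : 'M[R]_(m1, n1)) (B : 'M[R]_(m1, n2))
  (C : 'M[R]_(m2, n1)) (D : 'M[R]_(m2, n2)) :
  mx_ge0 A -> mx_ge0 B -> mx_ge0 C -> mx_ge0 D -> mx_ge0 (block_mx A B C D).
Proof.
move=> hA hB hC hD i j.
have hAB : mx_ge0 (row_mx A B) by apply/mx_ge0_row.
have hCD : mx_ge0 (row_mx C D) by apply/mx_ge0_row.
by case: (split_ordP i) => k ->; [rewrite col_mxEu | rewrite col_mxEd].
Qed.

Section Submatrices.
Variables n1 n2 : nat.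
Variable B : 'M[R]_(n1 + n2).
Hypothesis B_ge0 : mx_ge0 B.

Lemma mx_ge0_ursubmx : mx_ge0 (ursubmx B).
Proof. by move=> i j; rewrite !mxE; apply: B_ge0. Qed.

Lemma mx_ge0_dlsubmx : mx_ge0 (dlsubmx B).
Proof. by move=> i j; rewrite !mxE; apply: B_ge0. Qed.

Lemma mx_ge0_drsubmx : mx_ge0 (drsubmx B).
Proof. by move=> i j; rewrite !mxE; apply: B_ge0. Qed.

End Submatrices.

End NonnegativeMatrices.

Section RowMonotone.
Variable R : rcfType.

Definition row_monotone n (M : 'M[R]_n) :=
  forall x : 'rV_n, mx_ge0 (x *m M) -> mx_ge0 x.

Definition superinvariant n (s : R) (B : 'M[R]_n) (y : 'rV_n) :=
  [/\ mx_ge0 y, y != 0 & mx_le (s *: y) (y *m B)].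

Lemma row_monotone_unitmx n (M : 'M[R]_n) : row_monotone M -> M \in unitmx.
Proof.
move=> hM; rewrite unitmxE unitfE; apply/negP => /det0P [v /negP v_neq0 vM0].
by apply/v_neq0/eqP/mx_ge0_anti; apply: hM; rewrite ?mulNmx vM0 ?oppr0; apply: mx_ge00.
Qed.

Lemma row_monotone_invmx_ge0 n (M : 'M[R]_n) : row_monotone M -> mx_ge0 (invmx M).
Proof.
move=> hM i j; have hMu := row_monotone_unitmx hM.
have : mx_ge0 (row i (invmx M)).
  by apply: hM; rewrite -row_mul mulVmx // => k l; rewrite !mxE; case: (i == l).
by move/(_ 0 j); rewrite mxE.
Qed.

Lemma superinvariant_row_monotoneF n s (B : 'M[R]_n) y :
  superinvariant s B y -> ~ row_monotone (s%:M - B).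
Proof.
case=> y_ge0 /negP y_neq0 hle hmono; apply/y_neq0/eqP/mx_ge0_anti => //.
by apply: hmono; rewrite mulNmx mulmxBr mul_mx_scalar opprB; apply/mx_leE.
Qed.

Section SchurComplement.
Variable n : nat.
Implicit Types (s : R) (B : 'M[R]_(1 + n)).

Definition schur_shift s B : R :=
  s - ulsubmx B 0 0 - (ursubmx B *m invmx (s%:M - drsubmx B) *m dlsubmx B) 0 0.

Lemma scalar_sub_blockE s B :
  s%:M - B = block_mx (s%:M - ulsubmx B) (- ursubmx B) (- dlsubmx B) (s%:M - drsubmx B).
Proof. by rewrite -{1}(submxK B) scalar_mx_block opp_block_mx add_block_mx !sub0r. Qed.

Lemma det_block_schur (a : 'M[R]_1) (u : 'M_(1, n)) (v : 'M_(n, 1)) (D : 'M_n) :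
  D \in unitmx -> \det (block_mx a u v D) = (a - u *m invmx D *m v) 0 0 * \det D.
Proof.
move=> hD.
have -> : block_mx a u v D =
    block_mx 1%:M (u *m invmx D) 0 1%:M *m block_mx (a - u *m invmx D *m v) 0 v D.
  by rewrite mulmx_block !mul1mx !mul0mx !add0r subrK -mulmxA mulVmx // mulmx1.
by rewrite det_mulmx det_ublock det_lblock !det1 !mul1r det_mx11.
Qed.

Lemma det_scalar_sub_schur s B : s%:M - drsubmx B \in unitmx ->
  \det (s%:M - B) = schur_shift s B * \det (s%:M - drsubmx B).
Proof.
move=> hu; rewrite scalar_sub_blockE det_block_schur // !mulNmx !mulmxN !opprK.
by congr (_ * _); rewrite /schur_shift; move: (_ *m dlsubmx B) => w; rewrite !mxE eqxx.
Qed.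

Lemma row_monotone_schur s B : mx_ge0 B -> row_monotone (s%:M - drsubmx B) ->
  0 < schur_shift s B -> row_monotone (s%:M - B).
Proof.
move=> B_ge0 hmono schur_gt0 x; rewrite -(hsubmxK x) scalar_sub_blockE mul_row_block.
have hu := row_monotone_unitmx hmono; have G_ge0 := row_monotone_invmx_ge0 hmono.
have c_ge0 := mx_ge0_ursubmx B_ge0; have d_ge0 := mx_ge0_dlsubmx B_ge0.
move: schur_gt0 hu G_ge0; rewrite /schur_shift.
set b := ulsubmx B; set c := ursubmx B; set d := dlsubmx B; set D := _ - drsubmx B.
set G := invmx D; set x0 := lsubmx x; set x' := rsubmx x => schur_gt0 hu G_ge0.
move=> /mx_ge0_row [h0 h']; set y' := _ + _ in h'.
(* Solving the second block for x' turns the first one into x0 * schur_shift s B >= 0. *)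
have ex' : x' = y' *m G + x0 *m c *m G.
  rewrite /y' mulmxDl -[x' *m D *m G]mulmxA mulmxV // mulmx1 mulmxN mulNmx.
  by rewrite addrAC addNr add0r.
have x0_ge0 : mx_ge0 x0.
  have e : x0 *m (s%:M - b - c *m G *m d) = (x0 *m (s%:M - b) + x' *m - d) + y' *m G *m d.
    rewrite ex' mulmxBr mulmxN mulmxDl !mulmxA.
    move: (x0 *m (s%:M - b)) (y' *m G *m d) (x0 *m c *m G *m d) => a1 a2 a3.
    by apply/matrixP => i j; rewrite !mxE; ring.
  have : 0 <= (x0 *m (s%:M - b - c *m G *m d)) 0 0.
    rewrite e mxE; apply: addr_ge0; first exact: h0.
    by apply: mx_ge0_mul => //; apply: mx_ge0_mul.
  move: schur_gt0; move: (c *m G *m d) => w schur_gt0.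
  rewrite [_ - w]mx11_scalar mul_mx_scalar mxE.
  have -> : (s%:M - b - w) 0 0 = s - b 0 0 - w 0 0 by rewrite !mxE eqxx.
  by rewrite (pmulr_rge0 _ schur_gt0) => ? i j; rewrite !ord1.
have x'_ge0 : mx_ge0 x'.
  by rewrite ex'; apply: mx_ge0_add; do ?apply: mx_ge0_mul.
exact/mx_ge0_row.
Qed.

Lemma superinvariant_schur s B : mx_ge0 B -> row_monotone (s%:M - drsubmx B) ->
  schur_shift s B <= 0 ->
  superinvariant s B (row_mx 1%:M (ursubmx B *m invmx (s%:M - drsubmx B))).
Proof.
move=> B_ge0 hmono; have hu := row_monotone_unitmx hmono.
have G_ge0 := row_monotone_invmx_ge0 hmono; have c_ge0 := mx_ge0_ursubmx B_ge0.
rewrite /schur_shift; move: hu G_ge0.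
set b := ulsubmx B; set c := ursubmx B; set d := dlsubmx B; set B' := drsubmx B.
set G := invmx _ => hu G_ge0 schur_le0; split.
- by apply/mx_ge0_row; split; [apply: mx_ge01 | apply: mx_ge0_mul].
- apply/negP => /eqP /(congr1 (fun M : 'rV[R]_(1 + n) => M 0 (lshift n 0))).
  by rewrite row_mxEl !mxE eqxx /= => /eqP; rewrite oner_eq0.
rewrite -(submxK B) -/b -/c -/d -/B' mul_row_block scale_row_mx; apply/mx_le_row; split.
  move: schur_le0; move: (c *m G *m d) => w schur_le0.
  rewrite mul1mx => i j; rewrite !ord1 mxE [(b + w) _ _]mxE mxE eqxx mulr1; lra.
have GB' : G *m B' = s *: G - 1%:M.
  by have := mulVmx hu; rewrite mulmxBr mul_mx_scalar => <-; rewrite opprB addrC subrK.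
by rewrite mul1mx -mulmxA GB' mulmxBr mulmx1 -scalemxAr addrC subrK => i j.
Qed.

Lemma superinvariant_drsubmx s B (y : 'rV_n) : mx_ge0 B ->
  superinvariant s (drsubmx B) y -> superinvariant s B (row_mx 0 y).
Proof.
move=> B_ge0 [y_ge0 y_neq0 hle]; split.
- by apply/mx_ge0_row; split; [apply: mx_ge00 |].
- by apply: contra y_neq0 => /eqP; rewrite -row_mx0 => /eq_row_mx [_ ->].
rewrite -[in X in mx_le _ X](submxK B) mul_row_block scale_row_mx scaler0 !mul0mx !add0r.
apply/mx_le_row; split=> //.
by apply/mx_leE; rewrite subr0; apply: mx_ge0_mul => //; apply: mx_ge0_dlsubmx.
Qed.

End SchurComplement.

Lemma row_monotone_or_superinvariant n s (B : 'M[R]_n) : mx_ge0 B ->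
  row_monotone (s%:M - B) \/ exists y, superinvariant s B y.
Proof.
elim: n B => [|n IH] B B_ge0; first by left=> x _ i [].
case: (IH _ (@mx_ge0_drsubmx _ 1 n B B_ge0)) => [hmono | [y hy]]; last first.
  by right; exists (row_mx (0 : 'rV_1) y); apply: superinvariant_drsubmx.
have [schur_gt0 | schur_le0] := ltrP 0 (schur_shift s B).
  by left; apply: row_monotone_schur.
by right; eexists; apply: superinvariant_schur.
Qed.

End RowMonotone.

Lemma horner_char_poly (F : comNzRingType) n (C : 'M[F]_n) u :
  (char_poly C).[u] = \det (u%:M - C).
Proof.
rewrite /char_poly -horner_evalE -det_map_mx; congr (\det _); apply/matrixP => i j.
by rewrite !mxE /= horner_evalE hornerD hornerN hornerMn hornerX hornerC.
Qed.

Section NorootRowMonotone.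
Variable R : rcfType.

Lemma char_poly_gt0 n (B : 'M[R]_n) s :
  {in `[s, +oo[, forall u, ~~ root (char_poly B) u} -> 0 < (char_poly B).[s].
Proof.
move=> hno; have := sgp_pinftyP hno; rewrite /sgp_pinfty (monicP (char_poly_monic B)).
by rewrite sgr1 => /(_ s); rewrite in_itv /= lexx => /(_ isT) /eqP; rewrite sgr_cp0.
Qed.

Lemma poly_le0_right (p : {poly R}) t :
  (forall u, t < u -> p.[u] <= 0) -> p.[t] <= 0.
Proof.
move=> h; rewrite leNgt; apply/negP => pt_gt0.
have [d d_gt0 hcont] := poly_cont t p pt_gt0.
have d2_gt0 : 0 < d / 2 by rewrite divr_gt0.
have : `|t + d / 2 - t| < d.
  by rewrite addrAC subrr add0r ger0_norm ?ltW // ltr_pdivrMr // ltr_pMr // ltr1n.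
move/hcont; rewrite ltr_norml => /andP [h1 h2].
have := h (t + d / 2); rewrite ltrDl => /(_ d2_gt0); lra.
Qed.

Lemma largest_root (p : {poly R}) u0 : p != 0 -> root p u0 ->
  exists2 t, u0 <= t & root p t /\ {in `]t, +oo[, forall u, ~~ root p u}.
Proof.
move=> p_neq0 pu0; set K := Num.max u0 (cauchy_bound p) + 1.
have u0K : u0 < K by rewrite ltr_pwDr ?ltr01 // le_max lexx.
have noroot_K v : K <= v -> ~~ root p v.
  move=> Kv; apply: (ge_cauchy_bound p_neq0); rewrite in_itv /= andbT.
  by apply: le_trans Kv; rewrite ler_wpDr ?ler01 // le_max lexx orbT.
have noroot_gt t :
    {in `]t, K[, forall u, ~~ root p u} -> {in `]t, +oo[, forall u, ~~ root p u}.
  move=> hno v; rewrite in_itv /= andbT => tv.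
  by have [vK|/noroot_K //] := ltrP v K; apply: hno; rewrite in_itv /= tv vK.
case: (prev_rootP p u0 K) => [p0 | y _ py0 hy hno | _ _ _ hno].
- by rewrite p0 eqxx in p_neq0.
- exists y; last by split; [apply/rootP | apply: noroot_gt].
  by move: hy; rewrite in_itv /= => /andP [/ltW].
- by exists u0 => //; split; last by apply: noroot_gt.
Qed.

Section Step.
Variable n : nat.
Hypothesis IH : forall (B : 'M[R]_n) s, mx_ge0 B ->
  {in `[s, +oo[, forall u, ~~ root (char_poly B) u} -> row_monotone (s%:M - B).

Lemma noroot_char_poly_drsubmx (B : 'M[R]_(1 + n)) s : mx_ge0 B ->
  {in `[s, +oo[, forall u, ~~ root (char_poly B) u} ->
  {in `[s, +oo[, forall u, ~~ root (char_poly (drsubmx B)) u}.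
Proof.
(* Beyond the largest root t of char_poly (drsubmx B) the induction hypothesis
   makes the Schur term nonnegative, so g <= 0 there; by continuity g.[t] <= 0,
   i.e. (char_poly B).[t] <= 0, against char_poly_gt0. *)
move=> B_ge0 hno u0; rewrite in_itv /= andbT => su0; apply/negP => root_u0.
have B'_ge0 := mx_ge0_drsubmx B_ge0.
have [t u0t [root_t hno_t]] := largest_root (monic_neq0 (char_poly_monic _)) root_u0.
have hno_gt u : t < u -> {in `[u, +oo[, forall v, ~~ root (char_poly (drsubmx B)) v}.
  move=> tu v; rewrite in_itv /= andbT => uv; apply: hno_t.
  by rewrite in_itv /= andbT (lt_le_trans tu uv).
pose g := char_poly B - char_poly (drsubmx B) * ('X - (ulsubmx B 0 0)%:P).
have g_le0 u : t < u -> g.[u] <= 0.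
  move=> tu; have hmono := IH B'_ge0 (hno_gt u tu).
  have := char_poly_gt0 (hno_gt u tu); rewrite !horner_char_poly.
  rewrite /g hornerD hornerN hornerM hornerD hornerN hornerX hornerC !horner_char_poly.
  rewrite det_scalar_sub_schur ?row_monotone_unitmx // /schur_shift.
  have : 0 <= (ursubmx B *m invmx (u%:M - drsubmx B) *m dlsubmx B) 0 0.
    apply: mx_ge0_mul; last exact: mx_ge0_dlsubmx.
    by apply: mx_ge0_mul; [apply: mx_ge0_ursubmx | apply: row_monotone_invmx_ge0].
  move: (_ 0 0) (\det _) => w d w_ge0 d_gt0; nra.
have : 0 < (char_poly B).[t].
  apply: char_poly_gt0 => v; rewrite in_itv /= andbT => tv; apply: hno.
  by rewrite in_itv /= andbT (le_trans su0 (le_trans u0t tv)).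
have := poly_le0_right g_le0.
rewrite /g hornerD hornerN hornerM (rootP root_t) mul0r subr0; lra.
Qed.

Lemma row_monotone_noroot_step (B : 'M[R]_(1 + n)) s : mx_ge0 B ->
  {in `[s, +oo[, forall u, ~~ root (char_poly B) u} -> row_monotone (s%:M - B).
Proof.
move=> B_ge0 hno; have hno' := noroot_char_poly_drsubmx B_ge0 hno.
have hmono := IH (mx_ge0_drsubmx B_ge0) hno'.
apply: row_monotone_schur => //.
have := char_poly_gt0 hno'; have := char_poly_gt0 hno.
rewrite !horner_char_poly det_scalar_sub_schur ?row_monotone_unitmx //.
by move=> /[swap] det_gt0; rewrite (pmulr_lgt0 _ det_gt0).
Qed.

End Step.

Lemma row_monotone_noroot n (B : 'M[R]_n) s : mx_ge0 B ->
  {in `[s, +oo[, forall u, ~~ root (char_poly B) u} -> row_monotone (s%:M - B).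
Proof.
elim: n B s => [|n IH] B s B_ge0 hno; first by move=> x _ i [].
exact: (row_monotone_noroot_step IH B_ge0 hno).
Qed.

End NorootRowMonotone.

Section SpectralRadius.
Variable R : rcfType.

Lemma mem_spectrum n (B : 'M[R]_n) z :
  (z \in spectrum B) = root (char_poly (map_mx (real_complex R) B)) z.
Proof.
rewrite /spectrum; case: closed_field_poly_normal => r /= ->.
by rewrite (monicP (char_poly_monic _)) scale1r root_prod_XsubC.
Qed.

Lemma spectral_radius_ge0 n (B : 'M[R]_n) : 0 <= spectral_radius B.
Proof. exact: bigmax_ge_id. Qed.

Lemma le_spectral_radius n (B : 'M[R]_n) u : 0 <= u -> root (char_poly B) u ->
  u <= spectral_radius B.
Proof.
move=> u_ge0 root_u; have : (u%:C)%C \in spectrum B.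
  by rewrite mem_spectrum -map_char_poly fmorph_root.
move/(le_bigmax_seq 0 _ xpredT (@Normc.normc R)) => /(_ isT).
by rewrite /= expr0n addr0 sqrtr_sqr ger0_norm.
Qed.

Lemma spectral_radius_lt n (B : 'M[R]_n) s : 0 < s -> mx_ge0 B ->
  row_monotone (s%:M - B) -> spectral_radius B < s.
Proof.
move=> s_gt0 B_ge0 hmono; rewrite /spectral_radius big_seq.
apply: bigmax_lt => // z; rewrite mem_spectrum => /rootP.
rewrite horner_char_poly => /eqP /det0P [v v_neq0].
set Bc := map_mx _ B; rewrite mulmxBr mul_mx_scalar => /eqP; rewrite subr_eq0 => /eqP vB.
pose w : 'rV[R]_n := \row_j Normc.normc (v 0 j).
have w_ge0 : mx_ge0 w by move=> i j; rewrite mxE; apply: (@normr_ge0 _ (Rcomplex R)).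
rewrite ltNge; apply/negP => sz; move/negP: v_neq0; apply; apply/eqP/matrixP => i j.
suff /(congr1 (fun M : 'rV[R]_n => M i j)) : w = 0.
  by rewrite !mxE (ord1 i) => /Normc.eq0_normc.
apply: mx_ge0_anti => //; apply: hmono.
rewrite mulNmx mulmxBr mul_mx_scalar opprB => i' j'; rewrite !mxE subr_ge0 (ord1 i').
apply: le_trans (_ : Normc.normc z * Normc.normc (v 0 j') <= _).
  by apply: ler_wpM2r => //; apply: (@normr_ge0 _ (Rcomplex R)).
rewrite -Normc.normcM (_ : z * v 0 j' = (v *m Bc) 0 j'); last by rewrite -vB mxE.
rewrite mxE; apply: le_trans (@ler_norm_sum _ (Rcomplex R) _ _ _ _) _.
apply: ler_sum => k _; rewrite /Bc !mxE.
rewrite -[X in X <= _]/(Normc.normc (v 0 k * (B k j')%:C)%C) Normc.normcM /=.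
by rewrite expr0n addr0 sqrtr_sqr ger0_norm.
Qed.

Lemma spectral_radius_geP n (B : 'M[R]_n) s : mx_ge0 B -> 0 < s ->
  s <= spectral_radius B <-> exists y, superinvariant s B y.
Proof.
move=> B_ge0 s_gt0; split.
  case: (row_monotone_or_superinvariant s B_ge0) => // hmono.
  by have := spectral_radius_lt s_gt0 B_ge0 hmono; rewrite ltNge => /negP.
case=> y /superinvariant_row_monotoneF hnot; rewrite leNgt; apply/negP => lt_rho.
apply: hnot; apply: row_monotone_noroot => // u; rewrite in_itv /= andbT => su.
apply/negP => /(le_spectral_radius (le_trans (ltW s_gt0) su)); lra.
Qed.

End SpectralRadius.

Section ProperSplittings.
Variable R : rcfType.

Lemma eq_mulmx_col p q (M N : 'M[R]_(p, q)) :
  (forall x : 'cV_q, M *m x = N *m x) -> M = N.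
Proof.
move=> h; apply: trmx_inj; apply/eqP/mulmxP => u.
by rewrite -[u]trmxK -!trmx_mul h.
Qed.

Lemma null_sub_mul_pinv m n (M N : 'M[R]_(m, n)) Md : M *m Md *m M = M ->
  (forall x, in_null M x -> in_null N x) -> N *m (Md *m M) = N.
Proof.
move=> hM hnull; apply: eq_mulmx_col => x.
have /hnull : in_null M (x - Md *m M *m x) by rewrite /in_null mulmxBr !mulmxA hM subrr.
by rewrite /in_null mulmxBr => /eqP; rewrite subr_eq0 !mulmxA => /eqP.
Qed.

Lemma range_sub_mul_pinv m n (M N : 'M[R]_(m, n)) Md : M *m Md *m M = M ->
  (forall y, in_range N y -> in_range M y) -> M *m Md *m N = N.
Proof.
move=> hM hrange; apply: eq_mulmx_col => x.
rewrite -mulmxA; have [|w ->] := hrange (N *m x); first by exists x.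
by rewrite !mulmxA hM.
Qed.

Lemma sym_mulmx_eqr p (E F : 'M[R]_p) :
  E^T = E -> F^T = F -> E = E *m F -> F = F *m E -> E = F.
Proof. by move=> hE hF hEF hFE; rewrite -hE hEF trmx_mul hE hF -hFE. Qed.

Lemma sym_mulmx_eql p (E F : 'M[R]_p) :
  E^T = E -> F^T = F -> E = F *m E -> F = E *m F -> E = F.
Proof. by move=> hE hF hFE hEF; rewrite -hE hFE trmx_mul hE hF -hEF. Qed.

Variables m n : nat.
Variables (A P : 'M[R]_(m, n)) (Ad Pd : 'M[R]_(n, m)).
Hypotheses (A_MP : is_MP_inverse A Ad) (P_MP : is_MP_inverse P Pd).
Hypotheses (PA_range : same_range P A) (PA_null : same_null P A).

Lemma proper_splitting_pinv_ids : Pd *m P = Ad *m A /\ P *m Pd = A *m Ad.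
Proof.
case: A_MP P_MP => [a1 a2 a3 a4] [p1 p2 p3 p4].
have eA1 : A *m (Pd *m P) = A by apply: null_sub_mul_pinv p1 _ => x /PA_null.
have eP1 : P *m (Ad *m A) = P by apply: null_sub_mul_pinv a1 _ => x /PA_null.
have eA2 : P *m Pd *m A = A by apply: range_sub_mul_pinv p1 _ => y /PA_range.
have eP2 : A *m Ad *m P = P by apply: range_sub_mul_pinv a1 _ => y /PA_range.
split; [apply: sym_mulmx_eqr | apply: sym_mulmx_eql] => //.
- by rewrite -mulmxA eP1.
- by rewrite -mulmxA eA1.
- by rewrite mulmxA eP2.
- by rewrite mulmxA eA2.
Qed.

Lemma proper_splitting_pinvE : (1%:M - Pd *m (P - A)) *m Ad = Pd.
Proof.
have [e1 e2] := proper_splitting_pinv_ids.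
case: A_MP P_MP => [_ a2 _ _] [_ p2 _ _].
rewrite mulmxBl mul1mx mulmxBr mulmxBl e1 a2 -(mulmxA Pd) -e2 mulmxA p2.
by rewrite opprB addrC subrK.
Qed.

Hypotheses (Ad_ge0 : mx_ge0 Ad) (Pd_ge0 : mx_ge0 Pd).

Lemma proper_splitting_superinvariant1F y : ~ superinvariant 1 (Pd *m (P - A)) y.
Proof.
case=> y_ge0 /negP y_neq0; rewrite scale1r mx_leE => hle.
have yPd0 : y *m Pd = 0.
  apply: mx_ge0_anti; first exact: mx_ge0_mul.
  rewrite -proper_splitting_pinvE mulmxA -mulNmx mulmxBr mulmx1 opprB.
  exact: mx_ge0_mul.
by apply/y_neq0/eqP/mx_ge0_anti; rewrite // -sub0r -[0](mul0mx _ (P - A)) -yPd0 -mulmxA.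
Qed.

End ProperSplittings.

Section CompanionMatrices.
Variable R : rcfType.
Variable n : nat.
Implicit Types (X Y : 'M[R]_n) (s : R).

Definition companion X Y : 'M[R]_(n + n) := block_mx X Y 1%:M 0.

Lemma mx_ge0_companion X Y : mx_ge0 X -> mx_ge0 Y -> mx_ge0 (companion X Y).
Proof. by move=> hX hY; apply: mx_ge0_block => //; [apply: mx_ge01 | apply: mx_ge00]. Qed.

Lemma le_mul_companion X Y s (y1 y2 : 'rV[R]_n) :
  mx_le (s *: row_mx y1 y2) (row_mx y1 y2 *m companion X Y) <->
  mx_le (s *: y1) (y1 *m X + y2) /\ mx_le (s *: y2) (y1 *m Y).
Proof. by rewrite mul_row_block scale_row_mx mulmx1 mulmx0 addr0; apply: mx_le_row. Qed.

Lemma spectral_radius_companion_lt1 X Y : mx_ge0 X -> mx_ge0 Y ->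
  (forall y, ~ superinvariant 1 (X + Y) y) -> spectral_radius (companion X Y) < 1.
Proof.
move=> X_ge0 Y_ge0 hXY; rewrite ltNge; apply/negP.
case/(spectral_radius_geP (mx_ge0_companion X_ge0 Y_ge0) ltr01) => y [].
rewrite -(hsubmxK y); move: (lsubmx y) (rsubmx y) => y1 y2.
move=> /mx_ge0_row [y1_ge0 y2_ge0] /negP y_neq0 /le_mul_companion.
rewrite !scale1r !mx_leE => -[le1 le2].
have y1_0 : y1 = 0.
  apply/eqP/contraT => y1_neq0; exfalso; apply: (hXY y1); split; rewrite // scale1r mx_leE.
  have -> : y1 *m (X + Y) - y1 = (y1 *m X + y2 - y1) + (y1 *m Y - y2).
    by rewrite mulmxDr addrAC -!addrA; congr (_ + _); rewrite addrCA (addrC (y1 *m Y)) addNKr.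
  exact: mx_ge0_add.
have y2_0 : y2 = 0 by apply: mx_ge0_anti; rewrite // -sub0r -(mul0mx _ Y) -y1_0.
by apply: y_neq0; rewrite y1_0 y2_0 row_mx0.
Qed.

Section Comparison.
Variables X1 Y1 X2 Y2 : 'M[R]_n.
Hypotheses (X1_ge0 : mx_ge0 X1) (Y1_ge0 : mx_ge0 Y1) (X2_ge0 : mx_ge0 X2).
Hypotheses (Y2_ge0 : mx_ge0 Y2) (X21 : mx_le X2 X1) (Y21 : mx_le Y2 Y1).

Lemma companion_superinvariant_compare s y : 0 < s -> s <= 1 ->
  superinvariant s (companion (X2 + Y2 *m X1) (Y2 *m Y1)) y ->
  exists z, superinvariant s (companion X1 Y1) z.
Proof.
move=> s_gt0 s_le1 [].
rewrite -(hsubmxK y); move: (lsubmx y) (rsubmx y) => y1 y2.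
move=> /mx_ge0_row [y1_ge0 y2_ge0] /negP y_neq0 /le_mul_companion.
rewrite !mx_leE => -[le1 le2].
have si_ge0 : 0 <= s^-1 by rewrite invr_ge0 ltW.
have c_ge1 : 1 <= s^-1 * s^-1 by apply: mulr_ege1; rewrite invf_ge1.
set c := s^-1 * s^-1 in c_ge1.
(* With this z the second block holds with equality, and the defect of the first
   block splits into the nonnegative terms displayed below. *)
pose z1 := y1 + c *: (y1 *m Y2); pose z2 := s^-1 *: (z1 *m Y1).
have z1_ge0 : mx_ge0 z1.
  by apply: mx_ge0_add => //; apply: mx_ge0_scale; [lra | apply: mx_ge0_mul].
have z2_ge0 : mx_ge0 z2 by apply: mx_ge0_scale => //; apply: mx_ge0_mul.
exists (row_mx z1 z2); split; first by apply/mx_ge0_row.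
  apply/negP => /eqP; rewrite -row_mx0 => /eq_row_mx [z1_0 _].
  have y1_0 : y1 = 0.
    apply: mx_ge0_anti => //; rewrite (_ : - y1 = c *: (y1 *m Y2) - z1).
      by rewrite z1_0 subr0; apply: mx_ge0_scale; [lra | apply: mx_ge0_mul].
    by rewrite /z1 opprD addrCA subrr addr0.
  have y2_0 : y2 = 0.
    apply: mx_ge0_anti => //; rewrite -(scalerK (lt0r_neq0 s_gt0) (- y2)) scalerN.
    by apply: mx_ge0_scale => //; move: le2; rewrite y1_0 !mul0mx sub0r.
  by apply: y_neq0; rewrite y1_0 y2_0 row_mx0.
apply/le_mul_companion; split; last by rewrite /z2 scalerA mulfV ?scale1r // lt0r_neq0.
apply/mx_leE.
have -> : z1 *m X1 + z2 - s *: z1 =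
    y1 *m (X1 - X2) + s^-1 *: (y1 *m (Y1 - Y2))
    + (y1 *m (X2 + Y2 *m X1) + y2 - s *: y1)
    + s^-1 *: (y1 *m (Y2 *m Y1) - s *: y2)
    + (c - 1) *: (y1 *m Y2 *m (X1 + s^-1 *: Y1)).
  rewrite /z2 /z1 /c.
  do 4 (rewrite ?(mulmxDl, mulmxDr, mulmxBr, mulmxBl, mulmxN, mulNmx, mulmxA);
        rewrite -?scalemxAl -?scalemxAr).
  by apply/matrixP => i j; rewrite !mxE; field; rewrite lt0r_neq0.
apply: mx_ge0_add; last first.
  apply: mx_ge0_scale; first lra.
  by apply: mx_ge0_mul; [apply: mx_ge0_mul | apply: mx_ge0_add => //; apply: mx_ge0_scale].
apply: mx_ge0_add; last by apply: mx_ge0_scale.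
apply: mx_ge0_add => //.
apply: mx_ge0_add; first by apply: mx_ge0_mul => //; apply/mx_leE.
by apply: mx_ge0_scale => //; apply: mx_ge0_mul => //; apply/mx_leE.
Qed.

Lemma spectral_radius_companion_le :
  spectral_radius (companion X1 Y1) < 1 ->
  spectral_radius (companion (X2 + Y2 *m X1) (Y2 *m Y1)) <= spectral_radius (companion X1 Y1).
Proof.
have T_ge0 := mx_ge0_companion X1_ge0 Y1_ge0.
have W_ge0 : mx_ge0 (companion (X2 + Y2 *m X1) (Y2 *m Y1)).
  by apply: mx_ge0_companion; [apply: mx_ge0_add => //|]; apply: mx_ge0_mul.
move=> T_lt1; rewrite leNgt; apply/negP => lt_TW.
set s := Num.min (spectral_radius (companion (X2 + Y2 *m X1) (Y2 *m Y1))) 1.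
have s_gt0 : 0 < s by rewrite lt_min ltr01 (le_lt_trans (spectral_radius_ge0 _) lt_TW).
have s_leW : s <= spectral_radius (companion (X2 + Y2 *m X1) (Y2 *m Y1)).
  by rewrite ge_min lexx.
have s_le1 : s <= 1 by rewrite ge_min lexx orbT.
have [y hy] := (spectral_radius_geP W_ge0 s_gt0).1 s_leW.
have [z hz] := companion_superinvariant_compare s_gt0 s_le1 hy.
have := (spectral_radius_geP T_ge0 s_gt0).2 (ex_intro _ z hz).
by rewrite leNgt lt_min lt_TW T_lt1.
Qed.

End Comparison.
End CompanionMatrices.

Theorem theorem3p4 (R : rcfType) (m n : nat)
  (A P1 R1 S1 P2 R2 S2 : 'M[R]_(m, n))
  (Ad P1d P2d : 'M[R]_(n, m)) (Ahatd : 'M[R]_(n, m)) :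
  (* A is semi-monotone *)
  is_MP_inverse A Ad -> mx_ge0 Ad ->
  double_proper_weak_regular A P1 R1 S1 P1d ->
  double_proper_regular A P2 R2 S2 P2d ->
  (* N(S2) contains N(P2), R(S2) contained in R(P2) *)
  (forall x, in_null P2 x -> in_null S2 x) ->
  (forall y, in_range S2 y -> in_range P2 y) ->
  (* 1 is not in the spectrum of S2 P1^dagger *)
  (1 \notin spectrum (S2 *m P1d)) ->
  (* Ahat^dagger >= 0 with Ahat = (I - S2 P1^dagger) A *)
  is_MP_inverse ((1%:M - S2 *m P1d) *m A) Ahatd -> mx_ge0 Ahatd ->
  mx_le (P2d *m R2) (P1d *m R1) ->
  mx_le (P1d *m S1) (P2d *m S2) ->
  let W12 := block_mx (P2d *m R2 - P2d *m S2 *m P1d *m R1) (P2d *m S2 *m P1d *m S1)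
                      (1%:M : 'M[R]_n) 0 in
  let T1 := block_mx (P1d *m R1) (- (P1d *m S1)) (1%:M : 'M[R]_n) 0 in
  spectral_radius W12 <= spectral_radius T1 /\ spectral_radius T1 < 1.
Proof.
move=> A_MP Ad_ge0 [[defA range1 null1] P1_MP P1d_ge0 X1_ge0 S1_le0]
  [_ _ P2d_ge0 R2_ge0 S2_le0] _ _ _ _ _ le_X21 le_S12 W12 T1.
have Y1_ge0 : mx_ge0 (- (P1d *m S1)) by apply: mx_ge0_opp.
have X2_ge0 : mx_ge0 (P2d *m R2) by apply: mx_ge0_mul.
have Y2_ge0 : mx_ge0 (- (P2d *m S2)).
  by rewrite -mulmxN; apply: mx_ge0_mul => //; apply: mx_ge0_opp.
have T1_lt1 : spectral_radius T1 < 1.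
  apply: spectral_radius_companion_lt1 => // y.
  have -> : P1d *m R1 + - (P1d *m S1) = P1d *m (P1 - A).
    by rewrite defA opprD opprB addrA subrKC mulmxBr.
  exact: proper_splitting_superinvariant1F A_MP P1_MP range1 null1 Ad_ge0 P1d_ge0 y.
split => //.
have -> : W12 = companion (P2d *m R2 + - (P2d *m S2) *m (P1d *m R1))
                          (- (P2d *m S2) *m - (P1d *m S1)).
  by rewrite /W12 /companion !mulNmx mulmxN opprK !mulmxA.
apply: spectral_radius_companion_le => // i j; move: (le_S12 i j).
by rewrite !mxE lerN2.
Qed.
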